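(* Let $\mathbf G$ be a power-associative loop and $\Gamma^\pm=\mathcal G^\pm(\mathbf G)$. For each connected component $\Phi$ of $\Gamma^\pm$ that contains an element of infinite order, there exist connected components $\Psi_1,\Psi_2$ of $\mathcal G^+(\mathbf G)$ such that: (1) $V(\Phi)=V(\Psi_1)\cup V(\Psi_2)$; (2) $\Psi_1\cong\Psi_2$; (3) $\Phi\cong\Psi_1\boxtimes P_2$; (4) $\Psi_1\cong\Phi/\!\equiv_{\Gamma^\pm}$.
   Context: A loop is power-associative if every subloop generated by one element is a group; powers are computed in $\langle x\rangle$. The $Z^\pm$-power graph $\mathcal G^{\pm}(\mathbf G)$ has vertex set $G$, distinct $x,y$ adjacent iff $y=x^n$ or $x=y^n$ for some $n\in\mathbb Z\setminus\{0\}$; the $N$-power graph $\mathcal G^{+}(\mathbf G)$ is defined the same way with $n$ a positive integer. $P_2$ is the path on two vertices (a single edge). The strong product $\Gamma\boxtimes\Delta$ has vertex set $V(\Gamma)\times V(\Delta)$, with distinct $(x_1,y_1),(x_2,y_2)$ adjacent iff ($x_1=x_2$ or $x_1\sim x_2$) and ($y_1=y_2$ or $y_1\sim y_2$). For a graph $\Gamma$, $x\equiv_\Gamma y$ means $x,y$ have the same closed neighborhood in $\Gamma$; $\Phi/\!\equiv_{\Gamma^\pm}$ denotes the graph whose vertices are the $\equiv_{\Gamma^\pm}$-classes contained in $V(\Phi)$, two distinct classes being adjacent iff some (equivalently every) element of one is adjacent to some (every) element of the other. *)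

From Stdlib Require Import ZArith Relations.

(* A loop presented equationally: multiplication, identity, left and right
   division (equivalent to unique solvability of a x = b and y a = b). *)
Record is_loop (G : Type) (mul : G -> G -> G) (e : G)
       (ldiv rdiv : G -> G -> G) : Prop := {
  loop_mul1 : forall x, mul e x = x;
  loop_mulr1 : forall x, mul x e = x;
  loop_ldivK : forall a b, mul a (ldiv a b) = b;
  loop_mulKl : forall a b, ldiv a (mul a b) = b;
  loop_rdivK : forall a b, mul (rdiv b a) a = b;
  loop_mulKr : forall a b, rdiv (mul b a) a = b
}.

Inductive gen {G : Type} (mul : G -> G -> G) (e : G) (ldiv rdiv : G -> G -> G)
  (x : G) : G -> Prop :=
| gen_x : gen mul e ldiv rdiv x x
| gen_e : gen mul e ldiv rdiv x e
| gen_mul a b : gen mul e ldiv rdiv x a -> gen mul e ldiv rdiv x b ->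
                gen mul e ldiv rdiv x (mul a b)
| gen_ldiv a b : gen mul e ldiv rdiv x a -> gen mul e ldiv rdiv x b ->
                 gen mul e ldiv rdiv x (ldiv a b)
| gen_rdiv a b : gen mul e ldiv rdiv x a -> gen mul e ldiv rdiv x b ->
                 gen mul e ldiv rdiv x (rdiv a b).

(* Power-associative: every one-generated subloop is a group (an associative
   subloop is a group). *)
Definition power_associative {G : Type} (mul : G -> G -> G) (e : G)
  (ldiv rdiv : G -> G -> G) : Prop :=
  forall x a b c, gen mul e ldiv rdiv x a -> gen mul e ldiv rdiv x b ->
    gen mul e ldiv rdiv x c -> mul (mul a b) c = mul a (mul b c).

Fixpoint npow {G : Type} (mul : G -> G -> G) (e : G) (x : G) (n : nat) : G :=
  match n with
  | O => e
  | S m => mul (npow mul e x m) x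
  end.

Definition zpow {G : Type} (mul : G -> G -> G) (e : G) (ldiv : G -> G -> G)
  (x : G) (n : Z) : G :=
  match n with
  | Z0 => e
  | Zpos p => npow mul e x (Pos.to_nat p)
  | Zneg p => ldiv (npow mul e x (Pos.to_nat p)) e
  end.

Definition infinite_order {G : Type} (mul : G -> G -> G) (e : G) (x : G) : Prop :=
  forall n : nat, (0 < n)%nat -> npow mul e x n <> e.

Record graph := Graph { vtx : Type; adj : vtx -> vtx -> Prop }.

Definition zpower_graph {G : Type} (mul : G -> G -> G) (e : G)
  (ldiv : G -> G -> G) : graph :=
  Graph G (fun x y => x <> y /\ exists n : Z, n <> 0%Z /\
            (y = zpow mul e ldiv x n \/ x = zpow mul e ldiv y n)).

Definition npower_graph {G : Type} (mul : G -> G -> G) (e : G) : graph :=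
  Graph G (fun x y => x <> y /\ exists n : nat, (0 < n)%nat /\
            (y = npow mul e x n \/ x = npow mul e y n)).

Definition connected (Γ : graph) : vtx Γ -> vtx Γ -> Prop :=
  clos_refl_trans (vtx Γ) (adj Γ).

Definition induced (Γ : graph) (P : vtx Γ -> Prop) : graph :=
  Graph {u : vtx Γ | P u} (fun a b => adj Γ (proj1_sig a) (proj1_sig b)).

Definition component (Γ : graph) (v : vtx Γ) : graph :=
  induced Γ (connected Γ v).

Definition graph_iso (Γ Δ : graph) : Prop :=
  exists (f : vtx Γ -> vtx Δ) (g : vtx Δ -> vtx Γ),
    (forall a, g (f a) = a) /\ (forall b, f (g b) = b) /\
    (forall a b, adj Γ a b <-> adj Δ (f a) (f b)).

Definition strong_product (Γ Δ : graph) : graph :=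
  Graph (vtx Γ * vtx Δ)%type
    (fun p q => p <> q /\
       (fst p = fst q \/ adj Γ (fst p) (fst q)) /\
       (snd p = snd q \/ adj Δ (snd p) (snd q))).

Definition P2 : graph := Graph bool (fun a b => a <> b).

Definition same_closed_nbhd (Γ : graph) (x y : vtx Γ) : Prop :=
  forall w, (w = x \/ adj Γ x w) <-> (w = y \/ adj Γ y w).

Definition nbhd_class (Γ : graph) (u : vtx Γ) : vtx Γ -> Prop :=
  fun w => same_closed_nbhd Γ u w.

(* Φ / ≡_Γ where Φ has vertex set {u | S u} ⊆ V(Γ): vertices are the
   ≡_Γ-classes contained in S; distinct classes adjacent iff some element of
   one is adjacent (in Γ) to some element of the other. *)
Definition quotient_graph (Γ : graph) (S : vtx Γ -> Prop) : graph :=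
  Graph {C : vtx Γ -> Prop | (exists u, C = nbhd_class Γ u) /\
                             (forall w, C w -> S w)}
    (fun C D => proj1_sig C <> proj1_sig D /\
       exists a b, proj1_sig C a /\ proj1_sig D b /\ adj Γ a b).

(* For x of infinite order, a Z-power edge u -- u^n with n < 0 becomes an
   N-power edge once u is replaced by u^-1, so the component Phi of x is the
   union of the N-components Psi1 of x and Psi2 of x^-1, and inversion maps Psi1
   onto Psi2.  These are disjoint: any two vertices of one N-component are
   commensurable (a^n = b^m with n, m > 0), whereas x and x^-1 are not.  Within
   Psi1, Z-related vertices are already N-adjacent, so (u, b) |-> u or u^-1 is an
   isomorphism Psi1 ⊠ P2 ≅ Phi.  Finally the closed Z-neighbourhood of u
   determines u up to inversion (for |n| >= 2 the power u^(n + sgn n) is a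
   neighbour of u but not of u^n), so the ≡-classes of Phi are the pairs
   {u, u^-1}, each meeting Psi1 exactly once. *)

From Stdlib Require Import ZArith Relations Lia.
From Stdlib Require Import ClassicalEpsilon ProofIrrelevance FunctionalExtensionality PropExtensionality.

Lemma proj1_sig_inj {A : Type} (P : A -> Prop) (a b : {u | P u}) :
  proj1_sig a = proj1_sig b -> a = b.
Proof. apply eq_sig_hprop. intros; apply proof_irrelevance. Qed.

Lemma clos_refl_trans_mono {A : Type} (R R' : A -> A -> Prop) :
  (forall u v, R u v -> R' u v) ->
  forall a b, clos_refl_trans A R a b -> clos_refl_trans A R' a b.
Proof. intros HR a b. induction 1; eauto using rt_step, rt_refl, rt_trans. Qed.

Section ClosedNeighbourhoods.
Variable Γ : graph.

Lemma same_closed_nbhd_refl x : same_closed_nbhd Γ x x.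
Proof. intro w; tauto. Qed.

Lemma same_closed_nbhd_sym x y : same_closed_nbhd Γ x y -> same_closed_nbhd Γ y x.
Proof. intros H w; specialize (H w); tauto. Qed.

Lemma same_closed_nbhd_trans x y z :
  same_closed_nbhd Γ x y -> same_closed_nbhd Γ y z -> same_closed_nbhd Γ x z.
Proof. intros H1 H2 w; specialize (H1 w); specialize (H2 w); tauto. Qed.

Lemma nbhd_class_eq x y : nbhd_class Γ x = nbhd_class Γ y <-> same_closed_nbhd Γ x y.
Proof.
  split.
  - intro E. assert (Hy : nbhd_class Γ y y) by apply same_closed_nbhd_refl.
    rewrite <- E in Hy. exact Hy.
  - intro H. apply functional_extensionality; intro w.
    apply propositional_extensionality; unfold nbhd_class.
    split; eauto using same_closed_nbhd_trans, same_closed_nbhd_sym.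
Qed.

End ClosedNeighbourhoods.

Section Loop.
Variables (G : Type) (mul : G -> G -> G) (e : G) (ldiv rdiv : G -> G -> G).
Hypothesis HL : is_loop G mul e ldiv rdiv.
Hypothesis HPA : power_associative mul e ldiv rdiv.

Local Notation "a ^^ n" := (zpow mul e ldiv a n) (at level 30, right associativity).
Local Notation inv a := (ldiv a e).

Lemma mul1g a : mul e a = a. Proof. exact (loop_mul1 _ _ _ _ _ HL a). Qed.
Lemma mulg1 a : mul a e = a. Proof. exact (loop_mulr1 _ _ _ _ _ HL a). Qed.
Lemma mulgV a : mul a (inv a) = e. Proof. exact (loop_ldivK _ _ _ _ _ HL a e). Qed.
Lemma mulKg a b : ldiv a (mul a b) = b. Proof. exact (loop_mulKl _ _ _ _ _ HL a b). Qed.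

Lemma mulgI a b c : mul a b = mul a c -> b = c.
Proof. intro H. rewrite <- (mulKg a b), H, mulKg. reflexivity. Qed.

Lemma inv_unique a b : mul a b = e -> b = inv a.
Proof. intro H. rewrite <- H, mulKg. reflexivity. Qed.

Section AssociativeSubset.
Variable P : G -> Prop.
Hypothesis P_e : P e.
Hypothesis P_mul : forall a b, P a -> P b -> P (mul a b).
Hypothesis P_ldiv : forall a b, P a -> P b -> P (ldiv a b).
Hypothesis P_assoc : forall a b c, P a -> P b -> P c -> mul (mul a b) c = mul a (mul b c).
Section Powers.
Variable a : G.
Hypothesis P_a : P a.

Lemma npow_mem n : P (npow mul e a n).
Proof. induction n; simpl; auto. Qed.

Lemma zpow_mem n : P (a ^^ n).
Proof. destruct n; simpl; auto using npow_mem. Qed.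

Ltac mem := repeat first [assumption | apply P_e | apply P_mul | apply P_ldiv
                         | apply npow_mem | apply zpow_mem].

Lemma mulVg b : P b -> mul (inv b) b = e.
Proof.
  intro Hb. apply (mulgI b). rewrite <- P_assoc by mem.
  rewrite mulgV, mul1g, mulg1. reflexivity.
Qed.

Lemma invM b c : P b -> P c -> inv (mul b c) = mul (inv c) (inv b).
Proof.
  intros Hb Hc. symmetry. apply inv_unique.
  rewrite P_assoc by mem. rewrite <- (P_assoc c) by mem.
  rewrite mulgV, mul1g, mulgV. reflexivity.
Qed.

Lemma npowD n m : npow mul e a (n + m) = mul (npow mul e a n) (npow mul e a m).
Proof.
  induction m as [|m IH].
  - rewrite Nat.add_0_r. simpl. rewrite mulg1. reflexivity.
  - rewrite Nat.add_succ_r. simpl. rewrite IH, P_assoc by mem. reflexivity.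
Qed.

Lemma zpowS n : a ^^ Z.succ n = mul (a ^^ n) a.
Proof.
  destruct n as [|p|p].
  - reflexivity.
  - replace (Z.succ (Z.pos p)) with (Z.pos (Pos.succ p)) by lia.
    cbn [zpow]. rewrite Pos2Nat.inj_succ. reflexivity.
  - destruct (Pos.succ_pred_or p) as [->| <-].
    + simpl. rewrite mul1g. symmetry. apply mulVg; auto.
    + set (q := Pos.pred p).
      replace (Z.succ (Z.neg (Pos.succ q))) with (Z.neg q) by lia.
      cbn [zpow]. rewrite Pos2Nat.inj_succ.
      change (S (Pos.to_nat q)) with (1 + Pos.to_nat q)%nat.
      rewrite npowD. cbn [npow]. rewrite mul1g, invM, P_assoc, mulVg, mulg1 by mem.
      reflexivity.
Qed.

Lemma zpowP n : a ^^ Z.pred n = mul (a ^^ n) (inv a).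
Proof.
  rewrite <- (Z.succ_pred n) at 2. rewrite zpowS, P_assoc, mulgV, mulg1 by mem.
  reflexivity.
Qed.

Lemma zpowD n m : a ^^ (n + m) = mul (a ^^ n) (a ^^ m).
Proof.
  induction m using Z.peano_ind.
  - rewrite Z.add_0_r. simpl. rewrite mulg1. reflexivity.
  - rewrite Z.add_succ_r, !zpowS, IHm, P_assoc by mem. reflexivity.
  - rewrite Z.add_pred_r, !zpowP, IHm, P_assoc by mem. reflexivity.
Qed.

Lemma zpowN n : a ^^ (- n) = inv (a ^^ n).
Proof. apply inv_unique. rewrite <- zpowD, Z.add_opp_diag_r. reflexivity. Qed.

End Powers.

Lemma zpowM a n m : P a -> (a ^^ n) ^^ m = a ^^ (n * m).
Proof.
  intro Ha. assert (Han : P (a ^^ n)) by (apply zpow_mem; auto).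
  induction m using Z.peano_ind.
  - rewrite Z.mul_0_r. reflexivity.
  - rewrite zpowS, IHm, <- zpowD by auto. f_equal; lia.
  - rewrite zpowP, IHm, <- zpowN, <- zpowD by auto. f_equal; lia.
Qed.

End AssociativeSubset.

Lemma zpowgD a n m : a ^^ (n + m) = mul (a ^^ n) (a ^^ m).
Proof.
  exact (zpowD _ (gen_e mul e ldiv rdiv a) (gen_mul mul e ldiv rdiv a)
           (gen_ldiv mul e ldiv rdiv a) (HPA a) a (gen_x mul e ldiv rdiv a) n m).
Qed.

Lemma zpowgM a n m : (a ^^ n) ^^ m = a ^^ (n * m).
Proof.
  exact (zpowM _ (gen_e mul e ldiv rdiv a) (gen_mul mul e ldiv rdiv a)
           (gen_ldiv mul e ldiv rdiv a) (HPA a) a n m (gen_x mul e ldiv rdiv a)).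
Qed.

Lemma zpowg1 a : a ^^ 1 = a. Proof. apply mul1g. Qed.

Lemma zpow1g n : e ^^ n = e.
Proof. transitivity ((e ^^ 0) ^^ n); [reflexivity|]. rewrite zpowgM. reflexivity. Qed.

Lemma npow_zpow a n : npow mul e a n = a ^^ Z.of_nat n.
Proof. destruct n; [reflexivity|]. simpl. rewrite SuccNat2Pos.id_succ. reflexivity. Qed.

Local Notation Gz := (zpower_graph mul e ldiv).
Local Notation Gn := (npower_graph mul e).

Definition zinv a := a ^^ (-1).
Definition zpow_rel a b := exists n, n <> 0%Z /\ (b = a ^^ n \/ a = b ^^ n).
Definition pos_zpow_rel a b := exists n, (0 < n)%Z /\ (b = a ^^ n \/ a = b ^^ n).
Definition infinite_zorder a := forall n, a ^^ n = e -> n = 0%Z.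
Definition commensurable a b := exists n m, (0 < n)%Z /\ (0 < m)%Z /\ a ^^ n = b ^^ m.

Lemma adj_zpower a b : adj Gz a b <-> a <> b /\ zpow_rel a b.
Proof. reflexivity. Qed.

Lemma adj_npower a b : adj Gn a b <-> a <> b /\ pos_zpow_rel a b.
Proof.
  simpl. split; intros [Hne [n [Hn H]]]; split; auto.
  - exists (Z.of_nat n). split; [lia|]. rewrite !npow_zpow in H. exact H.
  - exists (Z.to_nat n). split; [lia|]. rewrite !npow_zpow, Z2Nat.id by lia. exact H.
Qed.

Lemma zpow_zinv a n : zinv a ^^ n = a ^^ (- n).
Proof. unfold zinv. rewrite zpowgM. f_equal; lia. Qed.

Lemma zinv_zpow a n : zinv (a ^^ n) = a ^^ (- n).
Proof. unfold zinv. rewrite zpowgM. f_equal; lia. Qed.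

Lemma zinvK a : zinv (zinv a) = a.
Proof. unfold zinv. rewrite zpowgM. apply zpowg1. Qed.

Lemma zinv_inj a b : zinv a = zinv b -> a = b.
Proof. intro H. rewrite <- (zinvK a), <- (zinvK b), H. reflexivity. Qed.

Lemma zpow_rel_refl a : zpow_rel a a.
Proof. exists 1%Z. split; [lia|left; symmetry; apply zpowg1]. Qed.

Lemma zpow_rel_sym a b : zpow_rel a b -> zpow_rel b a.
Proof. intros [n [Hn H]]. exists n. split; tauto. Qed.

Lemma zpow_rel_zinvl a b : zpow_rel (zinv a) b <-> zpow_rel a b.
Proof.
  assert (Himp : forall a b, zpow_rel a b -> zpow_rel (zinv a) b).
  { intros a' b' [n [Hn [H|H]]]; exists (- n)%Z; split; try lia.
    - left. rewrite zpow_zinv, Z.opp_involutive. exact H.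
    - right. rewrite H, zinv_zpow. reflexivity. }
  split; [|apply Himp]. intro H. rewrite <- (zinvK a). apply Himp, H.
Qed.

Lemma zpow_rel_zinvr a b : zpow_rel a (zinv b) <-> zpow_rel a b.
Proof. split; intro H; apply zpow_rel_sym, zpow_rel_zinvl, zpow_rel_sym, H. Qed.

Lemma pos_zpow_rel_zinv a b : pos_zpow_rel a b -> pos_zpow_rel (zinv a) (zinv b).
Proof.
  intros [n [Hn [H|H]]]; exists n; split; auto; [left|right];
    subst; rewrite zpow_zinv, zinv_zpow; reflexivity.
Qed.

Lemma adj_npower_zinv a b : adj Gn a b -> adj Gn (zinv a) (zinv b).
Proof.
  rewrite !adj_npower. intros [Hne H]. split.
  - intro E. apply Hne, zinv_inj, E.
  - apply pos_zpow_rel_zinv, H.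
Qed.

Lemma connected_npower_zinv a b : connected Gn a b -> connected Gn (zinv a) (zinv b).
Proof.
  induction 1; [apply rt_step, adj_npower_zinv; auto | apply rt_refl | eapply rt_trans; eauto].
Qed.

Lemma adj_npower_zpower a b : adj Gn a b -> adj Gz a b.
Proof.
  rewrite adj_npower, adj_zpower. intros [Hne [n [Hn H]]].
  split; auto. exists n. split; [lia|exact H].
Qed.

Lemma connected_npower_zpower a b : connected Gn a b -> connected Gz a b.
Proof. apply clos_refl_trans_mono, adj_npower_zpower. Qed.

Lemma commensurable_refl a : commensurable a a.
Proof. exists 1%Z, 1%Z. repeat split; lia. Qed.

Lemma commensurable_sym a b : commensurable a b -> commensurable b a.
Proof. intros [n [m [Hn [Hm H]]]]. exists m, n. auto. Qed.

Lemma commensurable_trans a b c :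
  commensurable a b -> commensurable b c -> commensurable a c.
Proof.
  intros [n [m [Hn [Hm H1]]]] [p [q [Hp [Hq H2]]]]. exists (n * p)%Z, (q * m)%Z.
  repeat split; try nia.
  rewrite <- zpowgM, H1, zpowgM, (Z.mul_comm m p), <- zpowgM, H2, zpowgM. reflexivity.
Qed.

Lemma connected_npower_commensurable a b : connected Gn a b -> commensurable a b.
Proof.
  induction 1 as [a b Hab| |]; eauto using commensurable_refl, commensurable_trans.
  apply adj_npower in Hab. destruct Hab as [_ [n [Hn [H|H]]]].
  - exists n, 1%Z. repeat split; try lia. rewrite zpowg1. auto.
  - exists 1%Z, n. repeat split; try lia. rewrite zpowg1. auto.
Qed.

Lemma infinite_orderP a : infinite_order mul e a -> infinite_zorder a.
Proof.
  intros H [|p|p] Hp; auto; exfalso; apply (H (Pos.to_nat p)); try lia; [exact Hp|].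
  cbn [zpow] in Hp. pose proof (mulgV (npow mul e a (Pos.to_nat p))) as E.
  rewrite Hp, mulg1 in E. exact E.
Qed.

Lemma zpow_inj a m n : infinite_zorder a -> a ^^ m = a ^^ n -> m = n.
Proof.
  intros Ha H. enough (a ^^ (m - n) = e) by (apply Ha in H0; lia).
  unfold Z.sub. rewrite zpowgD, H, <- zpowgD, Z.add_opp_diag_r. reflexivity.
Qed.

Lemma infinite_zorder_zpow_rel a b : infinite_zorder a -> zpow_rel a b -> infinite_zorder b.
Proof.
  intros Ha [n [Hn [H|H]]] z Hz; subst.
  - rewrite zpowgM in Hz. apply Ha in Hz. nia.
  - apply Ha. rewrite zpowgM, Z.mul_comm, <- zpowgM, Hz. apply zpow1g.
Qed.

Lemma connected_zpower_infinite a b :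
  infinite_zorder a -> connected Gz a b -> infinite_zorder b.
Proof.
  intros Ha H. induction H as [a b [_ Hab]| |]; eauto using infinite_zorder_zpow_rel.
Qed.

Lemma zinv_neq a : infinite_zorder a -> zinv a <> a.
Proof.
  intros Ha H. assert (E : a ^^ (-1) = a ^^ 1) by (rewrite zpowg1; exact H).
  apply zpow_inj in E; auto. lia.
Qed.

Lemma adj_zpower_zinv a : infinite_zorder a -> adj Gz a (zinv a).
Proof.
  intro Ha. split; [intro E; apply (zinv_neq a Ha); auto|].
  exists (-1)%Z. split; [lia|left; reflexivity].
Qed.

Lemma not_commensurable_zinv a : infinite_zorder a -> ~ commensurable a (zinv a).
Proof.
  intros Ha [n [m [Hn [Hm H]]]]. rewrite zpow_zinv in H. apply zpow_inj in H; auto. lia.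
Qed.

Lemma adj_zpower_cases u v : adj Gz u v -> adj Gn u v \/ connected Gn (zinv u) v.
Proof.
  intros [Hne [n [Hn H]]]. destruct (Z_lt_le_dec 0 n).
  { left. apply adj_npower. split; auto. exists n; auto. }
  right. destruct (classic (zinv u = v)) as [<-|E]; [apply rt_refl|].
  apply rt_step, adj_npower. split; auto. exists (- n)%Z. split; [lia|].
  destruct H as [H|H]; [left|right]; subst.
  - rewrite zpow_zinv, Z.opp_involutive. reflexivity.
  - apply zinv_zpow.
Qed.

Lemma zpow_rel_zpow a n m : infinite_zorder a -> zpow_rel (a ^^ n) (a ^^ m) ->
  exists k, k <> 0%Z /\ (m = (n * k)%Z \/ n = (m * k)%Z).
Proof.
  intros Ha [k [Hk [E|E]]]; exists k; rewrite zpowgM in E; apply zpow_inj in E; auto.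
Qed.

Lemma not_same_closed_nbhd_zpow a n : infinite_zorder a ->
  n <> 1%Z -> n <> (-1)%Z -> ~ same_closed_nbhd Gz a (a ^^ n).
Proof.
  intros Ha H1 H2 Hs.
  set (m := if Z_lt_le_dec 0 n then (n + 1)%Z else (n - 1)%Z).
  assert (Hm : (m <> 0 /\ m <> 1 /\ m <> n /\
                forall k, k <> 0 -> m <> n * k /\ n <> m * k)%Z).
  { unfold m; destruct (Z_lt_le_dec 0 n); repeat split; try lia; intro E;
      destruct (Z.le_gt_cases k 0); try nia; destruct (Z.le_gt_cases k 1); nia. }
  destruct Hm as [Hm0 [Hm1 [Hmn Hk]]].
  destruct (proj1 (Hs (a ^^ m))) as [E|[_ R]].
  - right. split; [|exists m; split; auto].
    intro E. assert (E' : a ^^ 1 = a ^^ m) by (rewrite zpowg1; exact E).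
    apply zpow_inj in E'; auto.
  - apply zpow_inj in E; auto.
  - destruct (zpow_rel_zpow a n m Ha R) as [k [Hk0 E]].
    pose proof (Hk k Hk0). tauto.
Qed.

Lemma same_closed_nbhd_zinv a : infinite_zorder a -> same_closed_nbhd Gz a (zinv a).
Proof.
  intros Ha w. pose proof (zinv_neq a Ha) as Hne.
  split; intros [->|[Hw R]].
  - right. split; [auto|]. apply zpow_rel_zinvl, zpow_rel_refl.
  - destruct (classic (w = zinv a)) as [->|E]; [left; reflexivity|].
    right. split; [congruence|]. apply zpow_rel_zinvl, R.
  - right. apply adj_zpower_zinv, Ha.
  - destruct (classic (w = a)) as [->|E]; [left; reflexivity|].
    right. split; [congruence|]. exact (proj1 (zpow_rel_zinvl a w) R).
Qed.

Lemma same_closed_nbhd_zpow_cases a n : infinite_zorder a ->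
  same_closed_nbhd Gz a (a ^^ n) -> a ^^ n = a \/ a ^^ n = zinv a.
Proof.
  intros Ha Hs.
  destruct (Z.eq_dec n 1) as [->|n1]; [left; apply zpowg1|].
  destruct (Z.eq_dec n (-1)) as [->|n2]; [right; reflexivity|].
  exfalso. exact (not_same_closed_nbhd_zpow a n Ha n1 n2 Hs).
Qed.

Lemma same_closed_nbhdP u w : infinite_zorder u ->
  same_closed_nbhd Gz u w -> w = u \/ w = zinv u.
Proof.
  intros Hu Hs.
  destruct (proj1 (Hs u) (or_introl eq_refl)) as [E|[_ [n [Hn [E|E]]]]].
  - left. auto.
  - assert (Hw : infinite_zorder w).
    { apply (infinite_zorder_zpow_rel u); auto. exists n. split; auto. }
    subst u. apply same_closed_nbhd_sym in Hs.
    destruct (same_closed_nbhd_zpow_cases w n Hw Hs) as [E|E]; [left|right];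
      rewrite E; [reflexivity|symmetry; apply zinvK].
  - subst w. apply same_closed_nbhd_zpow_cases; auto.
Qed.

Lemma npower_components_iso x : graph_iso (component Gn x) (component Gn (zinv x)).
Proof.
  assert (Hfw : forall u, connected Gn x u -> connected Gn (zinv x) (zinv u))
    by apply connected_npower_zinv.
  assert (Hbw : forall u, connected Gn (zinv x) u -> connected Gn x (zinv u)).
  { intros u H. rewrite <- (zinvK x). apply connected_npower_zinv, H. }
  exists (fun a => exist _ (zinv (proj1_sig a)) (Hfw _ (proj2_sig a))).
  exists (fun b => exist _ (zinv (proj1_sig b)) (Hbw _ (proj2_sig b))).
  split; [|split].
  - intros [u Hu]. apply proj1_sig_inj, zinvK.
  - intros [u Hu]. apply proj1_sig_inj, zinvK.
  - intros [u Hu] [v Hv]. simpl. split; [apply adj_npower_zinv|].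
    intro H. rewrite <- (zinvK u), <- (zinvK v). apply adj_npower_zinv, H.
Qed.

Section InfiniteOrderComponent.
Variable x : G.
Hypothesis Hx : infinite_zorder x.

Lemma commensurable_npower_components a b :
  connected Gn x a -> connected Gn (zinv x) b -> ~ commensurable a b.
Proof.
  intros Ha Hb H. apply (not_commensurable_zinv x Hx).
  apply connected_npower_commensurable in Ha, Hb.
  eauto using commensurable_trans, commensurable_sym.
Qed.

Lemma npower_components_disjoint u :
  connected Gn x u -> connected Gn (zinv x) u -> False.
Proof.
  intros H1 H2. exact (commensurable_npower_components u u H1 H2 (commensurable_refl u)).
Qed.

Lemma zpower_component_split u :
  connected Gz x u <-> connected Gn x u \/ connected Gn (zinv x) u.
Proof.
  split.
  - intro H. apply clos_rt_rtn1 in H. induction H as [|v w Hvw _ IH].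
    { left; apply rt_refl. }
    destruct (adj_zpower_cases v w Hvw) as [A|A]; destruct IH as [I|I].
    + left; eapply rt_trans; [exact I|apply rt_step, A].
    + right; eapply rt_trans; [exact I|apply rt_step, A].
    + right; eapply rt_trans; [apply connected_npower_zinv, I|exact A].
    + left; eapply rt_trans; [|exact A].
      rewrite <- (zinvK x). apply connected_npower_zinv, I.
  - intros [H|H]; apply connected_npower_zpower in H; [exact H|].
    eapply rt_trans; [apply rt_step, adj_zpower_zinv, Hx|exact H].
Qed.

Lemma zinv_npower_component u :
  connected Gz x u -> ~ connected Gn x u -> connected Gn x (zinv u).
Proof.
  intros H N. destruct (proj1 (zpower_component_split u) H) as [A|A]; [contradiction|].
  rewrite <- (zinvK x). apply connected_npower_zinv, A.
Qed.

Lemma zpower_component_infinite u : connected Gz x u -> infinite_zorder u.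
Proof. apply connected_zpower_infinite, Hx. Qed.

(* A negative exponent would make v commensurable with zinv u, which lies in the
   other N-component. *)
Lemma zpow_rel_adj_npower u v : connected Gn x u -> connected Gn x v ->
  u <> v -> zpow_rel u v -> adj Gn u v.
Proof.
  intros Hu Hv Hne [n [Hn H]]. destruct (Z_lt_le_dec 0 n).
  { apply adj_npower. split; auto. exists n; auto. }
  exfalso. apply (commensurable_npower_components v (zinv u) Hv).
  { apply connected_npower_zinv, Hu. }
  destruct H as [H|H]; subst.
  - exists 1%Z, (- n)%Z. repeat split; try lia. rewrite zpowg1, zpow_zinv, Z.opp_involutive. reflexivity.
  - exists (- n)%Z, 1%Z. repeat split; try lia. rewrite zpowg1, zinv_zpow. reflexivity.
Qed.

Local Notation Psi := {u | connected Gn x u}.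
Local Notation Phi := {u | connected Gz x u}.

Lemma zpow_rel_npower_component (a b : Psi) :
  zpow_rel (proj1_sig a) (proj1_sig b) <-> a = b \/ adj (component Gn x) a b.
Proof.
  destruct a as [u Hu], b as [v Hv]. simpl. split.
  - intro R. destruct (classic (u = v)) as [E|E].
    + left. apply proj1_sig_inj, E.
    + right. apply zpow_rel_adj_npower; auto.
  - intros [E|A].
    + injection E as <-. apply zpow_rel_refl.
    + apply adj_npower_zpower, A.
Qed.

Definition zinv_if (b : bool) u := if b then u else zinv u.

Lemma zpow_rel_zinv_if s t u v : zpow_rel (zinv_if s u) (zinv_if t v) <-> zpow_rel u v.
Proof. destruct s, t; simpl; rewrite ?zpow_rel_zinvl, ?zpow_rel_zinvr; reflexivity. Qed.

Definition layer (p : Psi * bool) : G := zinv_if (snd p) (proj1_sig (fst p)).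

Lemma layer_component p : connected Gz x (layer p).
Proof.
  apply zpower_component_split. destruct p as [[u Hu] []]; simpl; [left; exact Hu|].
  right. apply connected_npower_zinv, Hu.
Qed.

Definition from_layers (p : Psi * bool) : Phi := exist _ (layer p) (layer_component p).

Definition to_layers (a : Phi) : Psi * bool :=
  match excluded_middle_informative (connected Gn x (proj1_sig a)) with
  | left H => (exist _ (proj1_sig a) H, true)
  | right H => (exist _ (zinv (proj1_sig a)) (zinv_npower_component _ (proj2_sig a) H), false)
  end.

Lemma from_to_layers a : from_layers (to_layers a) = a.
Proof.
  destruct a as [u Hu]. apply proj1_sig_inj. unfold to_layers; simpl.
  destruct (excluded_middle_informative _); simpl; [reflexivity|apply zinvK].
Qed.

Lemma to_from_layers p : to_layers (from_layers p) = p.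
Proof.
  destruct p as [[u Hu] []]; unfold to_layers, from_layers, layer; simpl;
    destruct (excluded_middle_informative _) as [H|H].
  - f_equal. apply proj1_sig_inj. reflexivity.
  - contradiction.
  - exfalso. apply (npower_components_disjoint (zinv u) H), connected_npower_zinv, Hu.
  - f_equal. apply proj1_sig_inj, zinvK.
Qed.

Lemma layer_inj p q : layer p = layer q -> p = q.
Proof.
  intro E. rewrite <- (to_from_layers p), <- (to_from_layers q).
  f_equal. apply proj1_sig_inj, E.
Qed.

Lemma adj_layers p q : adj (component Gz x) (from_layers p) (from_layers q) <->
  adj (strong_product (component Gn x) P2) p q.
Proof.
  assert (R : zpow_rel (layer p) (layer q) <->
              fst p = fst q \/ adj (component Gn x) (fst p) (fst q)).
  { unfold layer. rewrite zpow_rel_zinv_if. apply zpow_rel_npower_component. }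
  change (layer p <> layer q /\ zpow_rel (layer p) (layer q) <->
          p <> q /\ (fst p = fst q \/ adj (component Gn x) (fst p) (fst q)) /\
          (snd p = snd q \/ snd p <> snd q)).
  pose proof (layer_inj p q).
  destruct (Bool.bool_dec (snd p) (snd q)); intuition congruence.
Qed.

Lemma zpower_component_strong_product_iso :
  graph_iso (component Gz x) (strong_product (component Gn x) P2).
Proof.
  exists to_layers, from_layers. split; [exact from_to_layers|split; [exact to_from_layers|]].
  intros a b. rewrite <- adj_layers, !from_to_layers. reflexivity.
Qed.


Local Notation Q := (quotient_graph Gz (connected Gz x)).

Lemma nbhd_class_in_component u : connected Gz x u ->
  (exists w, nbhd_class Gz u = nbhd_class Gz w) /\
  (forall w, nbhd_class Gz u w -> connected Gz x w).
Proof.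
  intro Hu. split; [exists u; reflexivity|]. intros w Hw.
  destruct (proj2 (Hw w) (or_introl eq_refl)) as [<-|A]; [exact Hu|].
  eapply rt_trans; [exact Hu|apply rt_step, A].
Qed.

Definition class_of (a : Psi) : vtx Q :=
  exist _ (nbhd_class Gz (proj1_sig a))
    (nbhd_class_in_component _ (connected_npower_zpower _ _ (proj2_sig a))).

Definition class_rep (C : vtx Q) : G :=
  proj1_sig (constructive_indefinite_description _ (proj1 (proj2_sig C))).

Lemma class_repE (C : vtx Q) : proj1_sig C = nbhd_class Gz (class_rep C).
Proof. exact (proj2_sig (constructive_indefinite_description _ (proj1 (proj2_sig C)))). Qed.

Lemma class_rep_component (C : vtx Q) : connected Gz x (class_rep C).
Proof. apply (proj2 (proj2_sig C)). rewrite class_repE. apply same_closed_nbhd_refl. Qed.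

Definition rep_of_class (C : vtx Q) : Psi :=
  match excluded_middle_informative (connected Gn x (class_rep C)) with
  | left H => exist _ (class_rep C) H
  | right H => exist _ (zinv (class_rep C)) (zinv_npower_component _ (class_rep_component C) H)
  end.

Lemma rep_of_classK a : rep_of_class (class_of a) = a.
Proof.
  destruct a as [u Hu]. apply proj1_sig_inj. set (C := class_of (exist _ u Hu)).
  assert (Hs : same_closed_nbhd Gz u (class_rep C)).
  { apply (proj1 (nbhd_class_eq Gz _ _)). rewrite <- class_repE. reflexivity. }
  assert (Hi : infinite_zorder u).
  { apply zpower_component_infinite, connected_npower_zpower, Hu. }
  unfold rep_of_class. destruct (excluded_middle_informative _) as [H|H]; simpl;
    destruct (same_closed_nbhdP u _ Hi Hs) as [E|E]; rewrite E in *.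
  - reflexivity.
  - exfalso. apply (npower_components_disjoint (zinv u) H), connected_npower_zinv, Hu.
  - contradiction.
  - apply zinvK.
Qed.

Lemma class_of_repK C : class_of (rep_of_class C) = C.
Proof.
  apply proj1_sig_inj. rewrite (class_repE C). unfold rep_of_class.
  destruct (excluded_middle_informative _); simpl; [reflexivity|].
  apply (proj2 (nbhd_class_eq Gz _ _)), same_closed_nbhd_sym, same_closed_nbhd_zinv.
  apply zpower_component_infinite, class_rep_component.
Qed.

Lemma adj_class_of a b : adj (component Gn x) a b <-> adj Q (class_of a) (class_of b).
Proof.
  destruct a as [u Hu], b as [v Hv].
  change (adj Gn u v <-> nbhd_class Gz u <> nbhd_class Gz v /\
     exists a' b', nbhd_class Gz u a' /\ nbhd_class Gz v b' /\ adj Gz a' b').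
  assert (Hiu : infinite_zorder u).
  { apply zpower_component_infinite, connected_npower_zpower, Hu. }
  assert (Hiv : infinite_zorder v).
  { apply zpower_component_infinite, connected_npower_zpower, Hv. }
  split.
  - intro A. split.
    + intro E. apply nbhd_class_eq in E.
      destruct (same_closed_nbhdP u v Hiu E) as [->| ->].
      * apply adj_npower in A. tauto.
      * apply (npower_components_disjoint (zinv u) Hv), connected_npower_zinv, Hu.
    + exists u, v. split; [apply same_closed_nbhd_refl|].
      split; [apply same_closed_nbhd_refl|apply adj_npower_zpower, A].
  - intros [Hne [a' [b' [Ha [Hb [_ R]]]]]]. change (zpow_rel a' b') in R.
    apply zpow_rel_adj_npower; auto; [intros ->; apply Hne; reflexivity|].
    destruct (same_closed_nbhdP u a' Hiu Ha) as [->| ->];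
      destruct (same_closed_nbhdP v b' Hiv Hb) as [->| ->];
      rewrite ?zpow_rel_zinvl, ?zpow_rel_zinvr in R; exact R.
Qed.

Lemma npower_component_quotient_iso : graph_iso (component Gn x) Q.
Proof.
  exists class_of, rep_of_class.
  split; [exact rep_of_classK|split; [exact class_of_repK|exact adj_class_of]].
Qed.

End InfiniteOrderComponent.
End Loop.

Theorem mainTheorem4 (G : Type) (mul : G -> G -> G) (e : G)
  (ldiv rdiv : G -> G -> G)
  (HL : is_loop G mul e ldiv rdiv)
  (HPA : power_associative mul e ldiv rdiv)
  (x : G) (Hx : infinite_order mul e x) :
  let Gpm := zpower_graph mul e ldiv in
  let Gp := npower_graph mul e in
  exists y1 y2 : G,
    (forall u : G, connected Gpm x u <-> (connected Gp y1 u \/ connected Gp y2 u)) /\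
    graph_iso (component Gp y1) (component Gp y2) /\
    graph_iso (component Gpm x) (strong_product (component Gp y1) P2) /\
    graph_iso (component Gp y1) (quotient_graph Gpm (connected Gpm x)).
Proof.
  intros Gpm Gp.
  pose proof (infinite_orderP G mul e ldiv rdiv HL x Hx) as Hinf.
  exists x, (zinv G mul e ldiv x). split; [|split; [|split]].
  - exact (zpower_component_split G mul e ldiv rdiv HL HPA x Hinf).
  - exact (npower_components_iso G mul e ldiv rdiv HL HPA x).
  - exact (zpower_component_strong_product_iso G mul e ldiv rdiv HL HPA x Hinf).
  - exact (npower_component_quotient_iso G mul e ldiv rdiv HL HPA x Hinf).
Qed.
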